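(* Let $\preceq_1,\preceq_2,\preceq_3$ be E-relations on $L$ and suppose $\preceq_2$ is not absurd. Then $(\preceq_1*\preceq_2)*\preceq_3=\preceq_1*(\preceq_2*\preceq_3)$.
   Context: $L$ is a propositional language built from a finite set of propositional variables with the connectives $\neg,\wedge,\vee,\rightarrow,\top,\bot$; $W$ is the finite set of propositional worlds. For $\theta\in L$, $S_\theta=\{w\in W\mid w\models\theta\}$; $E\models\phi$ means $\bigcap_{\theta\in E}S_\theta\subseteq S_\phi$, and $\models\phi$ means $\emptyset\models\phi$. E-relation: a relation $\preceq\subseteq L\times L$ such that for all $\theta,\phi,\psi$: (E1) $\theta\preceq\phi$ and $\phi\preceq\psi$ imply $\theta\preceq\psi$; (E2) $\theta\models\phi$ implies $\theta\preceq\phi$; (E3) $\theta\preceq\theta\wedge\phi$ or $\phi\preceq\theta\wedge\phi$; (E4) if $\bot\prec\psi$ for some $\psi$, then $\theta\preceq\phi$ for all $\theta$ implies $\models\phi$. Here $\theta\prec\phi$ iff $\theta\preceq\phi$ and not $\phi\preceq\theta$. An E-relation is absurd iff $\theta\preceq\phi$ for all $\theta,\phi\in L$. Sequences: finite sequences $\vec{\mathcal U}=(\mathcal U_0,\ldots,\mathcal U_k)$ of mutually disjoint subsets of $W$ (components may be empty, possibly repeatedly). $\mathrm{rank}^{\vec{\mathcal U}}(\theta)$ is the least $i$ with $\mathcal U_i\cap S_\theta\neq\emptyset$, $\infty$ if none ($i<\infty$ for all integers $i$). $\theta\mid\!\sim_{\vec{\mathcal U}}\phi$ iff $\mathrm{rank}^{\vec{\mathcal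 U}}(\theta)<\mathrm{rank}^{\vec{\mathcal U}}(\theta\wedge\neg\phi)$ or $\mathrm{rank}^{\vec{\mathcal U}}(\theta)=\infty$. $\vec{\mathcal U}$ is full iff $\bigcup_i\mathcal U_i=W$, empty iff $\bigcup_i\mathcal U_i=\emptyset$; $\Upsilon$ is the set of sequences which are full or empty. For $\vec{\mathcal U}\in\Upsilon$, $\theta\preceq_{\vec{\mathcal U}}\phi$ iff (not $\neg\theta\vee\neg\phi\mid\!\sim_{\vec{\mathcal U}}\theta$) or $\neg\phi\mid\!\sim_{\vec{\mathcal U}}\bot$. Sequence revision: for $\vec{\mathcal U}=(\mathcal U_0,\ldots,\mathcal U_k)$, $\vec{\mathcal V}=(\mathcal V_0,\ldots,\mathcal V_m)$ in $\Upsilon$, if $\vec{\mathcal U}$ is full then $\vec{\mathcal U}*\vec{\mathcal V}=(\mathcal U_0\cap\mathcal V_0,\ldots,\mathcal U_k\cap\mathcal V_0,\ \ldots,\ \mathcal U_0\cap\mathcal V_m,\ldots,\mathcal U_k\cap\mathcal V_m)$; otherwise $\vec{\mathcal U}*\vec{\mathcal V}=\vec{\mathcal V}$. Revision of E-relations: every E-relation equals $\preceq_{\vec{\mathcal U}}$ for some $\vec{\mathcal U}\in\Upsilon$, and for E-relations $\preceq_K,\preceq_E$ one defines $\preceq_K*\preceq_E=\preceq_{\vec{\mathcal U}*\vec{\mathcal V}}$, where $\vec{\mathcal U},\vec{\mathcal V}\in\Upsilon$ are any sequences with $\preceq_K=\preceq_{\vec{\mathcal U}}$ and $\preceq_E=\preceq_{\vec{\mathcal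 V}}$ (the result is independent of this choice and is again an E-relation). *)

From mathcomp Require Import all_boot.
From Stdlib Require Import ClassicalEpsilon.
Set Implicit Arguments. Unset Strict Implicit. Unset Printing Implicit Defensive.

Inductive form (V : Type) : Type :=
| Var of V
| Neg of form V
| And of form V & form V
| Or of form V & form V
| Imp of form V & form V
| Top
| Bot.
Arguments Top {V}.
Arguments Bot {V}.

Section Defs.
Variable V : finType.

Definition world := {ffun V -> bool}.

Fixpoint sat (w : world) (t : form V) : bool :=
  match t with
  | Var x => w x
  | Neg a => ~~ sat w a
  | And a b => sat w a && sat w b
  | Or a b => sat w a || sat w b
  | Imp a b => sat w a ==> sat w b
  | Top => true
  | Bot => false
  end.

Definition S (t : form V) : {set world} := [set w | sat w t].

Definition entails (t p : form V) : Prop := S t \subset S p.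
Definition valid (p : form V) : Prop := S p = [set: world].

Definition strict (R : form V -> form V -> Prop) t p := R t p /\ ~ R p t.

Definition E_relation (R : form V -> form V -> Prop) : Prop :=
  (forall t p q, R t p -> R p q -> R t q) /\
  (forall t p, entails t p -> R t p) /\
  (forall t p, R t (And t p) \/ R p (And t p)) /\
  ((exists q, strict R Bot q) -> forall p, (forall t, R t p) -> valid p).

Definition absurd (R : form V -> form V -> Prop) : Prop := forall t p, R t p.

Definition wseq := seq {set world}.

Definition mutually_disjoint (U : wseq) : Prop :=
  forall i j, i < j -> j < size U -> [disjoint nth set0 U i & nth set0 U j].

Definition full (U : wseq) : Prop := \bigcup_(A <- U) A = [set: world].
Definition empty_seq (U : wseq) : Prop := \bigcup_(A <- U) A = set0.

Definition Upsilon (U : wseq) : Prop :=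
  mutually_disjoint U /\ (full U \/ empty_seq U).

(* rank^U(theta): least i with U_i meeting S_theta; the value [size U]
   encodes infinity (every finite rank is < size U). *)
Definition rank (U : wseq) (t : form V) : nat :=
  find (fun A : {set world} => [exists w, (w \in A) && (w \in S t)]) U.

Definition is_inf (U : wseq) (n : nat) : bool := n == size U.

Definition nmsim (U : wseq) (t p : form V) : Prop :=
  rank U t < rank U (And t (Neg p)) \/ is_inf U (rank U t).

Definition prec (U : wseq) (t p : form V) : Prop :=
  ~ nmsim U (Or (Neg t) (Neg p)) t \/ nmsim U (Neg p) Bot.

Definition seq_rev (U W' : wseq) : wseq :=
  if [forall w : world, w \in \bigcup_(A <- U) A] then
    flatten [seq [seq A :&: B | A <- U] | B <- W']
  else W'.

Definition represents (R : form V -> form V -> Prop) (U : wseq) : Prop :=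
  Upsilon U /\ forall t p, R t p <-> prec U t p.

Definition rep (R : form V -> form V -> Prop) : wseq :=
  epsilon (inhabits [::]) (represents R).

Definition revE (R1 R2 : form V -> form V -> Prop) : form V -> form V -> Prop :=
  prec (seq_rev (rep R1) (rep R2)).

End Defs.

From mathcomp Require Import all_boot zify boolp.
From Stdlib Require Import ClassicalEpsilon.
Set Implicit Arguments. Unset Strict Implicit. Unset Printing Implicit Defensive.

(* A full sequence U orders the worlds by the index of the cell containing them, and
   [prec U] depends only on this total preorder: t precedes p iff every countermodel
   of p lies no earlier than some countermodel of t.  An empty sequence induces the
   absurd relation.  So a sequence in Upsilon is determined, as far as [prec] goes, by
   its preorder (or by being empty), and every E-relation arises this way, e.g. from
   the level sets of a rank function on worlds.  Revising a full U by V orders worlds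
   lexicographically, first by V and then by U, so revision respects this
   equivalence.  Finally, since R2 is not absurd its representative is full, and then
   sequence revision is associative on the nose: both sides are the sequence of the
   triple intersections of cells, in the same order. *)

Lemma find_predU (T : Type) (a b : pred T) s :
  find (predU a b) s = minn (find a s) (find b s).
Proof.
elim: s => [|x s IH] /=; first by rewrite minnn.
by case: (a x); case: (b x); rewrite /= ?min0n ?minn0 // IH minnSS.
Qed.

Lemma leq_mixed_radix n x1 x2 y1 y2 : x1 < n -> x2 < n ->
  (y1 * n + x1 <= y2 * n + x2) = (y1 < y2) || (y1 <= y2) && (x1 <= x2).
Proof. by move=> x1n x2n; case: ltngtP => y12; apply/idP/idP; nia. Qed.

Section Revision.
Variable V : finType.
Implicit Types (U A B C : seq {set world V}) (t p a b : form V) (w v : world V).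

Definition covered U w := has (fun A : {set world V} => w \in A) U.
Definition cell U w := find (fun A : {set world V} => w \in A) U.
Definition cell_le U w v := cell U w <= cell U v.

Lemma mem_bigcup_seq U w : (w \in \bigcup_(A <- U) A) = covered U w.
Proof. by elim: U => [|A U IH]; rewrite ?big_nil ?big_cons ?inE //= IH. Qed.

Lemma fullP U : reflect (full U) [forall w, w \in \bigcup_(A <- U) A].
Proof.
apply: (iffP forallP) => [covU|fullU w]; last by rewrite fullU inE.
by apply/setP => w; rewrite covU inE.
Qed.

Lemma full_covered U : full U <-> forall w, covered U w.
Proof.
split=> [/fullP/forallP covU w | covU]; first by rewrite -mem_bigcup_seq.
by apply/fullP/forallP => w; rewrite mem_bigcup_seq.
Qed.

Lemma full_cell U : full U <-> forall w, cell U w < size U.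
Proof. by rewrite full_covered; split=> covU w; have := covU w; rewrite /covered has_find. Qed.

Lemma empty_covered U : empty_seq U <-> forall w, ~~ covered U w.
Proof.
split=> [emptyU w | covU]; first by rewrite -mem_bigcup_seq emptyU inE.
by apply/setP => w; rewrite mem_bigcup_seq inE (negbTE (covU w)).
Qed.

Lemma full_empty_seq U : full U -> empty_seq U -> False.
Proof.
move=> /full_covered covU /empty_covered ncovU.
by have := ncovU [ffun=> true]; rewrite covU.
Qed.

Lemma empty_seq_nil : empty_seq (V := V) [::].
Proof. by rewrite /empty_seq big_nil. Qed.

Lemma Upsilon_nil : Upsilon (V := V) [::].
Proof. by split=> [i j _ // | ]; right; apply: empty_seq_nil. Qed.

Lemma rank_le_cell U a w : w \in S a -> rank U a <= cell U w.
Proof. by move=> wa; apply: sub_find => A wA; apply/existsP; exists w; rewrite wA. Qed.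

Lemma rank_witness U a : rank U a < size U ->
  exists2 w, w \in S a & cell U w <= rank U a.
Proof.
rewrite /rank -has_find => /(nth_find set0) /existsP[w /andP[wA wa]].
by exists w => //; rewrite /cell; case: leqP => // /(before_find set0); rewrite wA.
Qed.

Lemma rank_eq U a b : S a = S b -> rank U a = rank U b.
Proof. by move=> Sab; apply: eq_find => A; rewrite Sab. Qed.

Lemma rank_Or U a b : rank U (Or a b) = minn (rank U a) (rank U b).
Proof.
rewrite /rank -find_predU; apply: eq_find => A /=.
apply/existsP/orP => [[w]|[]/existsP[w]]; rewrite !inE.
- by case/andP=> wA /orP[]; [left|right]; apply/existsP; exists w; rewrite wA inE.
- by case/andP=> wA wa; exists w; rewrite wA inE /= wa.
- by case/andP=> wA wb; exists w; rewrite wA inE /= wb orbT.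
Qed.

Lemma precE U t p : prec U t p <-> rank U (Neg t) <= rank U (Neg p).
Proof.
rewrite /prec /nmsim /is_inf rank_Or.
rewrite (@rank_eq U (And (Or (Neg t) (Neg p)) (Neg t)) (Neg t)); last first.
  by apply/setP => w; rewrite !inE /=; case: (sat w t); case: (sat w p).
rewrite (@rank_eq U (And (Neg p) (Neg Bot)) (Neg p)); last first.
  by apply/setP => w; rewrite !inE /= andbT.
have rank_size a : rank U a <= size U by apply: find_size.
have := rank_size (Neg t); have := rank_size (Neg p).
set rt := rank U (Neg t); set rp := rank U (Neg p).
by split=> [[|[|/eqP]]|]; lia.
Qed.

Definition lift_rel (le : world V -> world V -> Prop) t p :=
  forall v, v \notin S p -> exists2 w, w \notin S t & le w v.

Lemma prec_full U t p : full U -> prec U t p <-> lift_rel (cell_le U) t p.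
Proof.
move=> /full_cell cellU; rewrite precE; split=> [le_tp v vp | lift_tp].
- have rank_v : rank U (Neg p) <= cell U v by apply: rank_le_cell; rewrite !inE in vp *.
  have : rank U (Neg t) < size U by have := cellU v; lia.
  case/rank_witness=> w wt le_w.
  by exists w; [rewrite !inE in wt * | rewrite /cell_le; lia].
- case: (ltnP (rank U (Neg p)) (size U)) => [/rank_witness[v vp le_v]|]; last first.
    by move=> ge; apply: leq_trans (find_size _ _) ge.
  have [|w wt le_wv] := lift_tp v; first by rewrite !inE in vp *.
  have : rank U (Neg t) <= cell U w by apply: rank_le_cell; rewrite !inE in wt *.
  by rewrite /cell_le in le_wv; lia.
Qed.

Lemma prec_empty U t p : empty_seq U -> prec U t p.
Proof.
move=> /empty_covered ncovU; apply/precE.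
have rank_size a : rank U a = size U.
  apply: hasNfind; apply/hasP => -[A AU /existsP[w /andP[wA _]]].
  by have /hasP := ncovU w; apply; exists A.
by rewrite !rank_size.
Qed.

Lemma prec_eq_cell_le U U' t p : full U -> full U' -> cell_le U =2 cell_le U' ->
  prec U t p <-> prec U' t p.
Proof.
move=> fullU fullU' eqUU'; rewrite (prec_full _ _ fullU) (prec_full _ _ fullU').
by split=> lift_tp v /lift_tp[w wt le_wv]; exists w; rewrite // ?eqUU' // -eqUU'.
Qed.

Definition seq_meet A B := flatten [seq [seq X :&: Y | X <- A] | Y <- B].

Lemma seq_rev_full A B : full A -> seq_rev A B = seq_meet A B.
Proof. by rewrite /seq_rev => /fullP ->. Qed.

Lemma seq_rev_nfull A B : ~ full A -> seq_rev A B = B.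
Proof. by rewrite /seq_rev => /fullP/negbTE ->. Qed.

Lemma seq_meet_cons A Y B :
  seq_meet A (Y :: B) = [seq X :&: Y | X <- A] ++ seq_meet A B.
Proof. by []. Qed.

Lemma covered_seq_meet A B w : covered (seq_meet A B) w = covered A w && covered B w.
Proof.
apply/hasP/andP => [[_ /flattenP[_ /mapP[Y YB ->] /mapP[X XA ->]]] | []].
  by rewrite inE => /andP[wX wY]; split; apply/hasP; [exists X | exists Y].
move=> /hasP[X XA wX] /hasP[Y YB wY]; exists (X :&: Y); last by rewrite inE wX.
by apply/flattenP; exists [seq X' :&: Y | X' <- A]; apply/mapP; [exists Y | exists X].
Qed.

Lemma full_seq_meet A B : full A -> full B -> full (seq_meet A B).
Proof. by rewrite !full_covered => covA covB w; rewrite covered_seq_meet covA covB. Qed.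

Lemma empty_seq_meet A B : empty_seq B -> empty_seq (seq_meet A B).
Proof. by rewrite !empty_covered => ncovB w; rewrite covered_seq_meet negb_and ncovB orbT. Qed.

Lemma seq_meet_assoc A B C : seq_meet (seq_meet A B) C = seq_meet A (seq_meet B C).
Proof.
elim: C => [|Z C IH] //.
rewrite !seq_meet_cons IH /seq_meet map_cat flatten_cat; congr (_ ++ _).
rewrite map_flatten -!map_comp; congr flatten; apply: eq_map => Y /=.
by rewrite -map_comp; apply: eq_map => X /=; rewrite setIA.
Qed.

Lemma seq_rev_assoc A B C : full B -> seq_rev (seq_rev A B) C = seq_rev A (seq_rev B C).
Proof.
move=> fullB; rewrite [seq_rev B C]seq_rev_full //.
case: (fullP A) => [fullA | nfullA]; last by rewrite !(seq_rev_nfull _ nfullA) seq_rev_full.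
by rewrite !(seq_rev_full _ fullA) seq_rev_full ?seq_meet_assoc //; apply: full_seq_meet.
Qed.

Lemma cell_seq_meet A B w : covered A w -> covered B w ->
  cell (seq_meet A B) w = cell B w * size A + cell A w.
Proof.
move=> covA; elim: B => [|Y B IH] //=.
rewrite seq_meet_cons /cell find_cat has_map find_map size_map -!/(cell _ w).
set meetY := preim _ _.
case wY: (w \in Y) => /= covB.
  have eq_meetY : meetY =1 (fun X => w \in X) by move=> X; rewrite /meetY /= inE wY andbT.
  by rewrite (eq_has eq_meetY) -/(covered A w) covA (eq_find eq_meetY).
have eq_meetY : meetY =1 pred0 by move=> X; rewrite /meetY /= inE wY andbF.
by rewrite (eq_has eq_meetY) has_pred0 IH // mulSn addnA.
Qed.

Lemma cell_le_seq_meet A B : full A -> full B -> cell_le (seq_meet A B) =2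
  (fun w v => ~~ cell_le B v w || cell_le B w v && cell_le A w v).
Proof.
move=> fullA fullB w v; have /full_covered covA := fullA; have /full_covered covB := fullB.
have /full_cell cellA := fullA.
by rewrite /cell_le !cell_seq_meet // leq_mixed_radix // ltnNge.
Qed.

Definition seq_equiv U U' :=
  (full U /\ full U' /\ cell_le U =2 cell_le U') \/ (empty_seq U /\ empty_seq U').

Lemma seq_equiv_refl U : full U \/ empty_seq U -> seq_equiv U U.
Proof. by case; [left | right]. Qed.

Lemma seq_equiv_sym U U' : seq_equiv U U' -> seq_equiv U' U.
Proof.
case=> [[fullU [fullU' eqUU']] | []]; last by right.
by left; do 2!split=> //; move=> w v; rewrite eqUU'.
Qed.

Lemma seq_equiv_trans U U' U'' : seq_equiv U U' -> seq_equiv U' U'' -> seq_equiv U U''.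
Proof.
case=> [[fullU [fullU' eqUU']] | [emptyU emptyU']]
       [[fullU'_ [fullU'' eqU'U'']] | [emptyU'_ emptyU'']].
- by left; do 2!split=> //; move=> w v; rewrite eqUU' eqU'U''.
- by case: (full_empty_seq fullU' emptyU'_).
- by case: (full_empty_seq fullU'_ emptyU').
- by right.
Qed.

Lemma seq_equiv_prec U U' t p : seq_equiv U U' -> prec U t p <-> prec U' t p.
Proof.
case=> [[fullU [fullU' eqUU']] | [emptyU emptyU']]; first exact: prec_eq_cell_le.
by split=> _; apply: prec_empty.
Qed.

Lemma seq_equiv_seq_rev A A' B B' :
  seq_equiv A A' -> seq_equiv B B' -> seq_equiv (seq_rev A B) (seq_rev A' B').
Proof.
case=> [[fullA [fullA' eqAA']] | [emptyA emptyA']] eqBB'; last first.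
  by rewrite !seq_rev_nfull // => /full_empty_seq; apply.
rewrite !seq_rev_full //; case: eqBB' => [[fullB [fullB' eqBB']] | [emptyB emptyB']].
  left; split; [exact: full_seq_meet | split; first exact: full_seq_meet].
  by move=> w v; rewrite !cell_le_seq_meet // !eqBB' eqAA'.
by right; split; apply: empty_seq_meet.
Qed.

Definition level_sets (f : world V -> nat) N := [seq [set w | f w == i] | i <- iota 0 N].

Lemma nth_level_sets f N i : i < N -> nth set0 (level_sets f N) i = [set w | f w == i].
Proof. by move=> iN; rewrite (nth_map 0) ?size_iota // nth_iota. Qed.

Lemma cell_level_sets f N w : f w < N -> cell (level_sets f N) w = f w.
Proof.
move=> fwN; rewrite /cell find_map.
rewrite (@eq_find _ _ (pred1 (f w))); last by move=> i; rewrite /= inE eq_sym.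
rewrite -/(index _ _) -{1}(add0n (f w)) -(nth_iota 0 0 fwN).
by rewrite index_uniq ?iota_uniq ?size_iota.
Qed.

Section LevelSets.
Variables (f : world V -> nat) (N : nat).
Hypothesis f_lt : forall w, f w < N.

Lemma full_level_sets : full (level_sets f N).
Proof. by apply/full_cell => w; rewrite cell_level_sets // size_map size_iota. Qed.

Lemma Upsilon_level_sets : Upsilon (level_sets f N).
Proof.
split; last by left; apply: full_level_sets.
move=> i j ij; rewrite size_map size_iota => jN.
rewrite !nth_level_sets ?(ltn_trans ij) //.
rewrite -setI_eq0; apply/eqP/setP => w; rewrite !inE.
by case: eqP => // ->; rewrite ltn_eqF.
Qed.

End LevelSets.

Definition char_form w : form V :=
  foldr (fun x a => And (if w x then Var x else Neg (Var x)) a) Top (enum V).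
Definition not_world w : form V := Neg (char_form w).
Definition avoiding (ws : seq (world V)) : form V :=
  foldr (fun w a => And (not_world w) a) Top ws.

Lemma sat_char_form v w : sat v (char_form w) = (v == w).
Proof.
have -> : sat v (char_form w) = all (fun x => v x == w x) (enum V).
  by rewrite /char_form; elim: (enum V) => //= x s ->; case: (w x) => /=; case: (v x).
apply/allP/eqP => [eq_vw | -> //]; apply/ffunP => x.
by apply/eqP/eq_vw; rewrite mem_enum.
Qed.

Lemma sat_not_world v w : sat v (not_world w) = (v != w).
Proof. by rewrite /= sat_char_form. Qed.

Lemma sat_avoiding v ws : sat v (avoiding ws) = (v \notin ws).
Proof. by elim: ws => //= w ws ->; rewrite sat_char_form in_cons negb_or. Qed.

Lemma prec_not_world U w v : full U -> prec U (not_world w) (not_world v) <-> cell_le U w v.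
Proof.
move=> fullU; rewrite (prec_full _ _ fullU); split=> [lift_wv | le_wv v'].
  by have [|w'] := lift_wv v; rewrite !inE !sat_not_world ?eqxx // negbK => /eqP ->.
by rewrite inE sat_not_world negbK => /eqP ->; exists w; rewrite // inE sat_not_world eqxx.
Qed.

Lemma full_nprec_Top_Bot U : full U -> ~ prec U Top Bot.
Proof.
move=> fullU; rewrite (prec_full _ _ fullU) => /(_ [ffun=> true]).
by rewrite inE => /(_ isT) [w]; rewrite inE.
Qed.

Lemma seq_equiv_of_prec Y X : Upsilon Y -> seq_equiv X X ->
  (forall t p, prec Y t p <-> prec X t p) -> seq_equiv Y X.
Proof.
case=> _ [fullY | emptyY] [[fullX _] | [emptyX _]] eqYX.
- left; do 2!split=> //; move=> w v.
  by apply/idP/idP; rewrite -!prec_not_world // => /eqYX.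
- by case: (full_nprec_Top_Bot fullY); apply/eqYX/prec_empty.
- by case: (full_nprec_Top_Bot fullX); apply/eqYX/prec_empty.
- by right.
Qed.

Section ERelation.
Variable R : form V -> form V -> Prop.
Hypothesis RE : E_relation R.

Lemma R_trans a b c : R a b -> R b c -> R a c.
Proof. by case: RE => R_tr _; apply: R_tr. Qed.

Lemma R_sat a b : (forall w, sat w a -> sat w b) -> R a b.
Proof. by case: RE => _ [R_ent _] ab; apply/R_ent/subsetP => w; rewrite !inE; apply: ab. Qed.

Lemma R_And_l a b c : R (And a b) c <-> R a c \/ R b c.
Proof.
have [le_a le_b] : R (And a b) a /\ R (And a b) b by split; apply: R_sat => w /andP[].
case: RE => _ [_ [R_and _]]; split=> [abc | [ac | bc]]; last 2 first.
- exact: R_trans le_a ac.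
- exact: R_trans le_b bc.
by case: (R_and a b) => [a_ab | b_ab]; [left | right]; apply: R_trans abc.
Qed.

Lemma R_And_r a b c : R c (And a b) <-> R c a /\ R c b.
Proof.
have [le_a le_b] : R (And a b) a /\ R (And a b) b by split; apply: R_sat => w /andP[].
case: RE => _ [_ [R_and _]]; split=> [c_ab | [ca cb]].
  by split; apply: R_trans c_ab _.
by case: (R_and a b) => [a_ab | b_ab]; [apply: R_trans ca _ | apply: R_trans cb _].
Qed.

Lemma R_total a b : R a b \/ R b a.
Proof.
have /R_And_l[ab | ba] : R (And a b) (And b a) by apply: R_sat => w /andP[wa wb]; apply/andP.
  by left; apply: (R_trans ab); apply: R_sat => w /andP[].
by right; apply: (R_trans ba); apply: R_sat => w /andP[].
Qed.

Hypothesis R_nabsurd : ~ absurd R.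

Lemma R_Top p w : ~~ sat w p -> ~ R Top p.
Proof.
move=> wp Rp; case: RE => _ [_ [_ R_valid]].
have R_Top_Bot : ~ R Top Bot.
  by move=> R_TB; apply: R_nabsurd => a b; apply: R_trans (R_trans _ R_TB) _; apply: R_sat.
have /setP/(_ w) : valid p.
  apply: R_valid; first by exists Top; split=> //; apply: R_sat.
  by move=> a; apply: R_trans Rp; apply: R_sat.
by rewrite !inE (negbTE wp).
Qed.

Lemma R_avoiding_l ws c :
  R (avoiding ws) c <-> (exists2 w, w \in ws & R (not_world w) c) \/ R Top c.
Proof.
elim: ws => [|w ws IH] /=; first by split; [right | case=> // -[]].
rewrite R_And_l IH; split=> [[wc | [[w' w'ws w'c] | Tc]] | [[w' ] | Tc]].
- by left; exists w; rewrite ?mem_head.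
- by left; exists w'; rewrite // in_cons w'ws orbT.
- by right.
- by rewrite in_cons => /orP[/eqP -> | w'ws] w'c; [left | right; left; exists w'].
- by right; right.
Qed.

Lemma R_avoiding_r ws c : R c (avoiding ws) <-> forall w, w \in ws -> R c (not_world w).
Proof.
elim: ws => [|w ws IH] /=; first by split=> // _; apply: R_sat.
rewrite R_And_r IH; split=> [[cw cws] w' | cws].
  by rewrite in_cons => /orP[/eqP -> | /cws].
by split=> [|w' w'ws]; apply: cws; rewrite in_cons ?eqxx ?w'ws ?orbT.
Qed.

Lemma R_lift t p : R t p <-> lift_rel (fun w v => R (not_world w) (not_world v)) t p.
Proof.
set ts := enum (~: S t); set ps := enum (~: S p).
have mem_avoid q w : sat w (avoiding (enum (~: S q))) = sat w q.
  by rewrite sat_avoiding mem_enum !inE negbK.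
have -> : R t p <-> R (avoiding ts) (avoiding ps).
  by split=> tp; apply: R_trans (R_trans _ tp) _; apply: R_sat => w; rewrite ?mem_avoid.
rewrite R_avoiding_r; split=> [tp v vp | lift_tp v].
  have /tp/R_avoiding_l[[w wts wv] | Tv] : v \in ps by rewrite mem_enum inE.
    by exists w; rewrite // mem_enum inE in wts.
  by case: (@R_Top _ v _ Tv); rewrite sat_not_world eqxx.
rewrite mem_enum inE => /lift_tp[w wt wv].
by apply/R_avoiding_l; left; exists w; rewrite // /ts mem_enum inE.
Qed.

Definition world_rank w := #|[set u | `[< ~ R (not_world w) (not_world u) >]]|.

Lemma world_rank_le w v : world_rank w <= world_rank v <-> R (not_world w) (not_world v).
Proof.
split=> [le_wv | wv]; last first.
  apply: subset_leq_card; apply/subsetP => u; rewrite !inE => /asboolP nwu.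
  by apply/asboolP => vu; apply/nwu/(R_trans wv).
apply/asboolP; apply: contraLR le_wv => /asboolP nwv; rewrite -ltnNge.
apply: proper_card; apply/properP; split.
  apply/subsetP => u; rewrite !inE => /asboolP nvu; apply/asboolP => wu.
  by case: (R_total (not_world w) (not_world v)) => // vw; apply/nvu/(R_trans vw).
by exists v; rewrite !inE; [apply/asboolP | apply/asboolP; apply; apply: R_sat].
Qed.

End ERelation.

Lemma E_relation_represented (R : form V -> form V -> Prop) :
  E_relation R -> exists U, represents R U.
Proof.
move=> RE; have [absR | nabsR] := pselect (absurd R).
  exists [::]; split=> [|t p]; first exact: Upsilon_nil.
  by split=> // _; exact/prec_empty/empty_seq_nil.
have rank_lt w : world_rank R w < #|world V|.+1 by rewrite ltnS max_card.
exists (level_sets (world_rank R) #|world V|.+1); split=> [|t p].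
  exact: Upsilon_level_sets.
rewrite (prec_full _ _ (full_level_sets rank_lt)) (R_lift RE nabsR).
split=> lift_tp v /lift_tp[w wt wv]; exists w => //.
  by rewrite /cell_le !cell_level_sets // world_rank_le.
by rewrite /cell_le !cell_level_sets // world_rank_le in wv.
Qed.

Lemma represents_rep (R : form V -> form V -> Prop) :
  E_relation R -> represents R (rep R).
Proof. by move/E_relation_represented; apply: epsilon_spec. Qed.

Lemma rep_prec X : seq_equiv X X -> seq_equiv (rep (prec X)) X.
Proof.
move=> eqXX; have [U [UpsU eqUX]] : exists U, Upsilon U /\ seq_equiv U X.
  case: eqXX => [[fullX _] | [emptyX _]]; last first.
    by exists [::]; split; [exact: Upsilon_nil | right; split; [exact: empty_seq_nil |]].
  have /full_cell cellX := fullX.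
  exists (level_sets (cell X) (size X)); split; first exact: Upsilon_level_sets.
  left; split; first exact: full_level_sets.
  by split=> // w v; rewrite /cell_le !cell_level_sets.
have [UpsY eqY] : represents (prec X) (rep (prec X)).
  by apply: epsilon_spec; exists U; split=> // t p; apply: iff_sym; exact: seq_equiv_prec.
by apply: seq_equiv_of_prec => // t p; apply: iff_sym.
Qed.

End Revision.

Theorem proposition7 (V : finType) (R1 R2 R3 : form V -> form V -> Prop) :
  E_relation R1 -> E_relation R2 -> E_relation R3 -> ~ absurd R2 ->
  forall t p : form V,
    revE (revE R1 R2) R3 t p <-> revE R1 (revE R2 R3) t p.
Proof.
move=> RE1 RE2 RE3 nabsR2 t p.
have [[_ /seq_equiv_refl equiv1] _] := represents_rep RE1.
have [[_ fe2] eqR2] := represents_rep RE2.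
have [[_ /seq_equiv_refl equiv3] _] := represents_rep RE3.
have full2 : full (rep R2).
  by case: fe2 => // empty2; case: nabsR2 => a b; apply/eqR2/prec_empty.
have equiv2 := seq_equiv_refl fe2.
rewrite /revE; apply: seq_equiv_prec.
apply: (seq_equiv_trans (U' := seq_rev (seq_rev (rep R1) (rep R2)) (rep R3))).
  exact: seq_equiv_seq_rev (rep_prec (seq_equiv_seq_rev equiv1 equiv2)) equiv3.
rewrite seq_rev_assoc //; apply: seq_equiv_seq_rev equiv1 _.
exact/seq_equiv_sym/rep_prec/seq_equiv_seq_rev.
Qed.
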